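(* Let $\lambda>0$, $L>0$, $1\le m\le d$, and let $\boldsymbol{x}_1,\ldots,\boldsymbol{x}_t\in\mathbb{R}^d$ satisfy $\|\boldsymbol{x}_s\|\le L$. With $\boldsymbol{V}_t=\boldsymbol{X}_t^\top\boldsymbol{X}_t+\lambda\boldsymbol{I}$ and $\bar\rho_t$ from the FD sketch of size $m$ of $\boldsymbol{x}_1,\ldots,\boldsymbol{x}_t$, $$\ln\frac{\det(\boldsymbol{V}_t)}{\det(\lambda\boldsymbol{I})}\le d\ln\Big(1+\frac{\bar\rho_t}{\lambda}\Big)+m\ln\Big(1+\frac{tL^2}{m\lambda}\Big).$$
   Context: $\boldsymbol{X}_t$ is the $t\times d$ matrix with rows $\boldsymbol{x}_1^\top,\ldots,\boldsymbol{x}_t^\top$. Frequent Directions (FD) sketch of size $m$ ($1\le m\le d$) of a sequence $\boldsymbol{x}_1,\boldsymbol{x}_2,\ldots\in\mathbb{R}^d$: set $\boldsymbol{S}_0=\boldsymbol{0}\in\mathbb{R}^{m\times d}$. For $s\ge1$ let $\boldsymbol{A}_s=\boldsymbol{S}_{s-1}^\top\boldsymbol{S}_{s-1}+\boldsymbol{x}_s\boldsymbol{x}_s^\top$, let $\sigma_1\ge\cdots\ge\sigma_d\ge0$ be its eigenvalues with orthonormal eigenvectors $\boldsymbol{u}_1,\ldots,\boldsymbol{u}_d$, set $\rho_s=\sigma_m$, and let $\boldsymbol{S}_s\in\mathbb{R}^{m\times d}$ have $i$-th row $\sqrt{\sigma_i-\rho_s}\,\boldsymbol{u}_i^\top$ ($i=1,\ldots,m$).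 Define $\bar\rho_t=\rho_1+\cdots+\rho_t$ ($\bar\rho_0=0$). *)

From HB Require Import structures.
From mathcomp Require Import all_boot all_order all_algebra.
Set Implicit Arguments. Unset Strict Implicit. Unset Printing Implicit Defensive.
Import Order.TTheory GRing.Theory Num.Theory.
Local Open Scope ring_scope.

(* Given S_{s-1} = Sprev and x_s = x, with A_s = Sprev^T Sprev + x^T x:
   sigma 0 >= ... >= sigma (d-1) are the eigenvalues of A_s with orthonormal
   eigenvectors u 0, ..., u (d-1) (row vectors; indices are 0-based, so the
   paper's sigma_i, u_i are sigma (i-1), u (i-1)); rho = sigma_m (paper) =
   sigma m.-1 (here); and the i-th row of Snew is sqrt(sigma_i - rho) u_i^T. *)
Definition FD_step (R : rcfType) (m d : nat) (Sprev : 'M[R]_(m, d))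
    (x : 'rV[R]_d) (rho : R) (Snew : 'M[R]_(m, d)) : Prop :=
  let A := Sprev^T *m Sprev + x^T *m x in
  exists (sigma : nat -> R) (u : nat -> 'rV[R]_d),
    (forall i j, (i < d)%N -> (j < d)%N -> u i *m (u j)^T = (i == j)%:R%:M) /\
    (forall i, (i < d)%N -> u i *m A = sigma i *: u i) /\
    (forall i j, (i <= j)%N -> (j < d)%N -> sigma j <= sigma i) /\
    rho = sigma m.-1 /\
    Snew = \matrix_(i < m, j < d) (Num.sqrt (sigma i - rho) * u i 0 j).

Definition vnorm (R : rcfType) (d : nat) (v : 'rV[R]_d) : R :=
  Num.sqrt (\sum_(j < d) v 0 j ^+ 2).

From HB Require Import structures.
From mathcomp Require Import all_boot all_order all_algebra.
Import Order.TTheory GRing.Theory Num.Theory.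
Local Open Scope ring_scope.
Set Implicit Arguments. Unset Strict Implicit. Unset Printing Implicit Defensive.

(* Write Q_s = S_s^T S_s.  In the eigenbasis of A_s, an FD step lowers every
   eigenvalue by at most rho_s, so Delta_s = rho_s I - A_s + Q_s is positive
   semidefinite.  The Delta_s telescope: sum_s x_s x_s^T + sum_s Delta_s =
   Q_t + rhobar_t I, and adding positive semidefinite matrices to lambda I only
   increases the determinant, so det V_t <= det (Q_t + (lambda + rhobar_t) I).
   Finally Q_t has at most m nonzero eigenvalues and trace at most t L^2, and
   AM-GM on those eigenvalues gives the second factor. *)

Lemma mulmx_tr_rows (R : pzSemiRingType) (n d : nat) (A B : 'M[R]_(n, d)) :
  A^T *m B = \sum_(i < n) (row i A)^T *m row i B.
Proof.
apply/matrixP => a b; rewrite !mxE summxE; apply: eq_bigr => i _.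
by rewrite !mxE big_ord1 !mxE.
Qed.

Section Gram.
Variable R : realDomainType.

Lemma gram_quad_ge0 (k d : nat) (M : 'M[R]_(k, d)) (w : 'rV[R]_d) :
  0 <= (w *m (M^T *m M) *m w^T) 0 0.
Proof.
rewrite !mulmxA -(mulmxA _ M) -[w *m M^T]trmxK trmx_mul trmxK mxE.
by apply: sumr_ge0 => j _; rewrite mxE -expr2 sqr_ge0.
Qed.

Lemma mxtrace_gram_ge0 (k d : nat) (M : 'M[R]_(k, d)) : 0 <= \tr (M^T *m M).
Proof.
apply: sumr_ge0 => i _; rewrite mxE; apply: sumr_ge0 => j _.
by rewrite mxE -expr2 sqr_ge0.
Qed.

End Gram.

Lemma mxtrace_outer_vnorm (R : rcfType) (d : nat) (x : 'rV[R]_d) :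
  \tr (x^T *m x) = vnorm x ^+ 2.
Proof.
rewrite mxtrace_mulC /vnorm sqr_sqrtr; last by apply: sumr_ge0 => j _; rewrite sqr_ge0.
by rewrite /mxtrace big_ord1 mxE; apply: eq_bigr => j _; rewrite mxE expr2.
Qed.

Lemma det_add1_rank1 (R : comPzRingType) (d : nat) (C : 'M[R]_(d, 1)) (B : 'M[R]_(1, d)) :
  \det (1%:M + C *m B) = 1 + (B *m C) 0 0.
Proof.
have E : block_mx (1%:M + C *m B) (-C) 0 1%:M *m block_mx 1%:M 0 B 1%:M
         = block_mx 1%:M 0 B 1%:M *m block_mx 1%:M (-C) 0 (1%:M + B *m C).
  rewrite !mulmx_block !mul1mx !mulmx1 !mul0mx !mulmx0 !add0r !addr0.
  by rewrite mulNmx addrK mulmxN (addrC 1%:M) addKr.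
move: (congr1 determinant E).
rewrite !det_mulmx !det_ublock !det_lblock !det1 !mulr1 !mul1r => ->.
by rewrite det_mx11 !mxE eqxx.
Qed.

Section PositiveDefinite.
Variables (R : realFieldType) (d : nat).

Definition posdef (V : 'M[R]_d) :=
  V^T = V /\ forall w : 'rV[R]_d, w != 0 -> 0 < (w *m V *m w^T) 0 0.

Definition sos (D : 'M[R]_d) := exists s : seq 'rV[R]_d, D = \sum_(v <- s) v^T *m v.

Lemma posdef_scalar (lam : R) : 0 < lam -> posdef lam%:M.
Proof.
move=> lam_gt0; split=> [|w w_neq0]; first exact: tr_scalar_mx.
rewrite mul_mx_scalar -scalemxAl mxE pmulr_rgt0 // mxE lt_def.
have w2_ge0 i : true -> 0 <= w 0 i * w^T i 0 by rewrite mxE -expr2 sqr_ge0.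
rewrite sumr_ge0 // andbT; apply: contra w_neq0 => /eqP w2_eq0.
apply/eqP/rowP => j; move/eqP: (psumr_eq0P w2_ge0 w2_eq0 isT (i := j)).
by rewrite mxE -expr2 sqrf_eq0 => /eqP ->; rewrite mxE.
Qed.

Lemma posdef_det_le_add_rank1 (V : 'M[R]_d) (v : 'rV[R]_d) :
  posdef V -> 0 < \det V -> posdef (V + v^T *m v) /\ \det V <= \det (V + v^T *m v).
Proof.
move=> [V_sym V_pos] detV_gt0.
have V_unit : V \in unitmx by rewrite unitmxE unitfE gt_eqF.
split.
  split=> [|w w_neq0]; first by rewrite raddfD /= V_sym trmx_mul trmxK.
  by rewrite mulmxDr mulmxDl mxE ltr_wpDr ?gram_quad_ge0 ?V_pos.
have -> : V + v^T *m v = V *m (1%:M + (invmx V *m v^T) *m v).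
  by rewrite mulmxDr mulmx1 !mulmxA mulmxV // mul1mx.
rewrite det_mulmx det_add1_rank1 -[X in X <= _]mulr1 ler_pM2l // lerDl.
have [->|v_neq0] := eqVneq v 0; first by rewrite mul0mx mxE.
have w_neq0 : v *m invmx V != 0.
  by apply: contraNneq v_neq0 => vV0; rewrite -(mulmxKV V_unit v) vV0 mul0mx.
(* v V^-1 v^T is the quadratic form of V at v V^-1 *)
move: (V_pos _ w_neq0); rewrite mulmxKV // trmx_mul trmx_inv V_sym mulmxA.
exact: ltW.
Qed.

Lemma posdef_det_le_add_sos (V D : 'M[R]_d) :
  sos D -> posdef V -> 0 < \det V -> posdef (V + D) /\ \det V <= \det (V + D).
Proof.
move=> [s ->]; elim: s V => [|v s IH] V V_pos detV_gt0; first by rewrite big_nil addr0.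
rewrite big_cons addrA.
have [V1_pos detV1] := posdef_det_le_add_rank1 v V_pos detV_gt0.
have [V2_pos detV2] := IH _ V1_pos (lt_le_trans detV_gt0 detV1).
by split=> //; apply: le_trans detV2.
Qed.

Lemma sos_outer (v : 'rV[R]_d) : sos (v^T *m v).
Proof. by exists [:: v]; rewrite big_seq1. Qed.

Lemma sos_sum (I : Type) (r : seq I) (P : pred I) (F : I -> 'M[R]_d) :
  (forall i, P i -> sos (F i)) -> sos (\sum_(i <- r | P i) F i).
Proof.
move=> F_sos; apply: big_ind => //; first by exists [::]; rewrite big_nil.
by move=> _ _ [s ->] [s' ->]; exists (s ++ s'); rewrite big_cat.
Qed.

End PositiveDefinite.

Lemma sos_scale_outer (R : rcfType) (d : nat) (a : R) (v : 'rV[R]_d) :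
  0 <= a -> sos (a *: (v^T *m v)).
Proof.
move=> a_ge0; exists [:: Num.sqrt a *: v]; rewrite big_seq1.
by rewrite !linearZ /= -scalemxAl scalerA -expr2 sqr_sqrtr.
Qed.

Section Orthonormal.
Variables (R : comPzRingType) (d : nat) (u : nat -> 'rV[R]_d).
Hypothesis u_orth :
  forall i j, (i < d)%N -> (j < d)%N -> u i *m (u j)^T = (i == j)%:R%:M.
Let U : 'M[R]_d := \matrix_(i < d) u i.

Lemma orthonormal_mulmx_tr : U *m U^T = 1%:M.
Proof.
apply/matrixP => a b.
move: (congr1 (fun M : 'M_1 => M 0 0) (u_orth (ltn_ord a) (ltn_ord b))).
rewrite /= [in RHS]mxE eqxx mulr1n => uab.
rewrite [RHS]mxE -[a == b]/(val a == val b) -uab !mxE.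
by apply: eq_bigr => k _; rewrite !mxE.
Qed.

Lemma orthonormal_tr_mulmx : U^T *m U = 1%:M.
Proof. exact: mulmx1C orthonormal_mulmx_tr. Qed.

Lemma orthonormal_spectral_sum (e : 'I_d -> R) :
  \sum_(i < d) e i *: ((u i)^T *m u i) = U^T *m (diag_mx (\row_j e j) *m U).
Proof.
rewrite mulmx_tr_rows; apply: eq_bigr => i _; rewrite rowK scalemxAr.
by congr (_ *m _); apply/rowP => j; rewrite mul_diag_mx !mxE.
Qed.

Lemma det_orthonormal_spectral_sum (e : 'I_d -> R) :
  \det (\sum_(i < d) e i *: ((u i)^T *m u i)) = \prod_(i < d) e i.
Proof.
have detU2 : \det U * \det U = 1.
  by rewrite -{2}det_tr -det_mulmx orthonormal_mulmx_tr det1.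
rewrite orthonormal_spectral_sum !det_mulmx det_tr det_diag mulrCA detU2 mulr1.
by apply: eq_bigr => i _; rewrite mxE.
Qed.

Lemma sum_orthonormal_outer : \sum_(i < d) (u i)^T *m u i = 1%:M.
Proof.
by rewrite -orthonormal_tr_mulmx mulmx_tr_rows; apply: eq_bigr => i _; rewrite rowK.
Qed.

Lemma eigen_orthonormal_spectral_sum (A : 'M[R]_d) (sigma : nat -> R) :
  (forall i, (i < d)%N -> u i *m A = sigma i *: u i) ->
  A = \sum_(i < d) sigma i *: ((u i)^T *m u i).
Proof.
move=> u_eig; rewrite orthonormal_spectral_sum -[LHS]mul1mx -orthonormal_tr_mulmx.
rewrite -mulmxA; congr (_ *m _); apply/row_matrixP => i.
by rewrite row_mul rowK u_eig //; apply/rowP => j; rewrite mul_diag_mx !mxE.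
Qed.

Lemma mxtrace_orthonormal_outer i : (i < d)%N -> \tr ((u i)^T *m u i) = 1.
Proof. by move=> lt_id; rewrite mxtrace_mulC u_orth // eqxx mxtrace1. Qed.

End Orthonormal.

(* AM-GM on the at most m nonzero terms b_i, after bounding 1 + b_i / c by 1 + b_i / lam. *)
Lemma prod_shift_le_AGM (R : realFieldType) (d m : nat) (lam c : R) (b : 'I_d -> R) :
  0 < lam -> lam <= c -> (m <= d)%N -> (0 < m)%N ->
  (forall i, 0 <= b i) -> (forall i : 'I_d, (m <= i)%N -> b i = 0) ->
  \prod_i (c + b i) <= c ^+ d * (1 + (\sum_i b i) / (m%:R * lam)) ^+ m.
Proof.
move=> lam_gt0 lam_le_c le_md m_gt0 b_ge0 b_eq0.
have c_gt0 : 0 < c by apply: lt_le_trans lam_le_c.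
pose A := [pred i : 'I_d | (i < m)%N].
have cardA : #|A| = m.
  by rewrite -sum1_card -(big_ord_widen d (fun _ => 1%N) le_md) sum1_card card_ord.
apply: le_trans (_ : \prod_i (c * (1 + b i / lam)) <= _).
  apply: ler_prod => i _; apply/andP; split; first by rewrite addr_ge0 ?b_ge0 ?ltW.
  by rewrite mulrDr mulr1 lerD2l mulrCA ler_peMr // ler_pdivlMr // mul1r.
rewrite prodrMl card_ord ler_pM2l ?exprn_gt0 //.
have sum_A : \sum_i b i = \sum_(i in A) b i.
  rewrite [LHS](bigID A) /= [X in _ + X]big1 ?addr0 // => i.
  by rewrite -leqNgt => /b_eq0.
rewrite sum_A [\prod_i _](bigID A) /= [X in _ * X]big1 ?mulr1; last first.
  by move=> i; rewrite -leqNgt => /b_eq0 ->; rewrite mul0r addr0.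
have term_ge0 i : 0 <= 1 + b i / lam by rewrite addr_ge0 // divr_ge0 // ltW.
move: (leif_AGM (A := A) (E := fun i => 1 + b i / lam)); rewrite cardA => AGM.
apply: le_trans (leif_le (AGM (fun i _ => term_ge0 i))) _.
apply: lerXn2r; rewrite ?nnegrE.
- by rewrite divr_ge0 ?ler0n // sumr_ge0.
- by rewrite addr_ge0 // divr_ge0 ?sumr_ge0 // mulr_ge0 ?ler0n // ltW.
rewrite big_split /= sumr_const cardA -mulr_suml mulrDl divff ?pnatr_eq0 -?lt0n //.
by rewrite lerD2l invfM mulrA mulrAC.
Qed.

Definition FD_residual (R : pzRingType) (m d : nat) (Sp Sn : 'M[R]_(m, d))
    (x : 'rV[R]_d) (rho : R) : 'M[R]_d :=
  rho%:M - (Sp^T *m Sp + x^T *m x) + Sn^T *m Sn.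

Section FDStep.
Variables (R : rcfType) (m d : nat) (Sp Sn : 'M[R]_(m, d)) (x : 'rV[R]_d) (rho : R).
Variables (sigma : nat -> R) (u : nat -> 'rV[R]_d).
Let A := Sp^T *m Sp + x^T *m x.
Let X i := (u i)^T *m u i.
Hypotheses (m_gt0 : (0 < m)%N) (le_md : (m <= d)%N).
Hypothesis u_orth :
  forall i j, (i < d)%N -> (j < d)%N -> u i *m (u j)^T = (i == j)%:R%:M.
Hypothesis u_eig : forall i, (i < d)%N -> u i *m A = sigma i *: u i.
Hypothesis sigma_sorted : forall i j, (i <= j)%N -> (j < d)%N -> sigma j <= sigma i.
Hypothesis rhoE : rho = sigma m.-1.
Hypothesis SnE : Sn = \matrix_(i < m, j < d) (Num.sqrt (sigma i - rho) * u i 0 j).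

Let b (i : 'I_d) := if (i < m)%N then sigma i - rho else 0.

Lemma FD_eigval_ge0 i : (i < d)%N -> 0 <= sigma i.
Proof.
move=> lt_id; have -> : sigma i = (u i *m A *m (u i)^T) 0 0.
  by rewrite u_eig // -scalemxAl u_orth // eqxx mxE [_%:M _ _]mxE eqxx mulr1.
by rewrite /A mulmxDr mulmxDl mxE addr_ge0 ?gram_quad_ge0.
Qed.

Lemma FD_rho_ge0 : 0 <= rho.
Proof. by rewrite rhoE FD_eigval_ge0 // prednK. Qed.

Lemma FD_rho_le_eigval i : (i < m)%N -> rho <= sigma i.
Proof.
move=> lt_im; rewrite rhoE sigma_sorted //; first by rewrite -ltnS prednK.
by rewrite prednK.
Qed.

Lemma FD_eigval_le_rho i : (m <= i)%N -> (i < d)%N -> sigma i <= rho.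
Proof. by move=> le_mi lt_id; rewrite rhoE sigma_sorted // (leq_trans (leq_pred m)). Qed.

Lemma FD_shrunk_ge0 i : 0 <= b i.
Proof. by rewrite /b; case: ifP => // /FD_rho_le_eigval; rewrite subr_ge0. Qed.

Lemma FD_gram_spectral : Sn^T *m Sn = \sum_(i < d) b i *: X i.
Proof.
have -> : \sum_(i < d) b i *: X i = \sum_(i < m) (sigma i - rho) *: X i.
  rewrite (big_ord_widen d (fun i => (sigma i - rho) *: X i) le_md) [RHS]big_mkcond /=.
  by apply: eq_bigr => i _; rewrite /b; case: ifP => //; rewrite scale0r.
rewrite mulmx_tr_rows; apply: eq_bigr => i _.
have -> : row i Sn = Num.sqrt (sigma i - rho) *: u i.
  by apply/rowP => j; rewrite SnE !mxE.
rewrite !linearZ /= -scalemxAl scalerA -expr2 sqr_sqrtr // subr_ge0.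
exact: FD_rho_le_eigval.
Qed.

Let mxtrace_spectral (c : 'I_d -> R) : \tr (\sum_(i < d) c i *: X i) = \sum_(i < d) c i.
Proof.
rewrite raddf_sum; apply: eq_bigr => i _.
by rewrite /= mxtraceZ mxtrace_orthonormal_outer // mulr1.
Qed.

Let scalar_spectral (c : R) : c%:M = \sum_(i < d) c *: X i.
Proof. by rewrite -scaler_sumr sum_orthonormal_outer // scalemx1. Qed.

Lemma FD_mxtrace_le : \tr (Sn^T *m Sn) <= \tr (Sp^T *m Sp) + \tr (x^T *m x).
Proof.
rewrite -mxtraceD -/A (eigen_orthonormal_spectral_sum u_orth u_eig).
rewrite FD_gram_spectral !mxtrace_spectral; apply: ler_sum => i _.
by rewrite /b; case: ifP => _; [rewrite lerBlDr lerDl FD_rho_ge0 | exact: FD_eigval_ge0].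
Qed.

Lemma FD_residual_sos : sos (FD_residual Sp Sn x rho).
Proof.
rewrite /FD_residual -/A (eigen_orthonormal_spectral_sum u_orth u_eig).
rewrite FD_gram_spectral scalar_spectral -sumrB -big_split /=.
apply: sos_sum => i _; rewrite -scalerBl -scalerDl; apply: sos_scale_outer.
rewrite /b; case: ifP => lt_im; first by rewrite addrA subrK subrr.
by rewrite addr0 subr_ge0 FD_eigval_le_rho // leqNgt lt_im.
Qed.

Lemma FD_det_gram_le lam c : 0 < lam -> lam <= c ->
  \det (Sn^T *m Sn + c%:M) <= c ^+ d * (1 + \tr (Sn^T *m Sn) / (m%:R * lam)) ^+ m.
Proof.
move=> lam_gt0 lam_le_c.
have -> : Sn^T *m Sn + c%:M = \sum_(i < d) (c + b i) *: X i.
  by rewrite FD_gram_spectral scalar_spectral -big_split; apply: eq_bigr => i _;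
     rewrite scalerDl addrC.
rewrite det_orthonormal_spectral_sum // FD_gram_spectral mxtrace_spectral.
apply: prod_shift_le_AGM => // [|i]; first exact: FD_shrunk_ge0.
by rewrite /b leqNgt => /negbTE ->.
Qed.

End FDStep.

Section FDStepFacts.
Variables (R : rcfType) (m d : nat) (Sp Sn : 'M[R]_(m, d)) (x : 'rV[R]_d) (rho : R).
Hypotheses (m_gt0 : (0 < m)%N) (le_md : (m <= d)%N) (step : FD_step Sp x rho Sn).

Lemma FD_step_rho_ge0 : 0 <= rho.
Proof.
case: step => sigma [u [orth [eig [_ [rhoE _]]]]].
exact: FD_rho_ge0 m_gt0 le_md orth eig rhoE.
Qed.

Lemma FD_step_mxtrace_le : \tr (Sn^T *m Sn) <= \tr (Sp^T *m Sp) + \tr (x^T *m x).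
Proof.
case: step => sigma [u [orth [eig [sorted [rhoE SnE]]]]].
exact: FD_mxtrace_le m_gt0 le_md orth eig sorted rhoE SnE.
Qed.

Lemma FD_step_residual_sos : sos (FD_residual Sp Sn x rho).
Proof.
case: step => sigma [u [orth [eig [sorted [rhoE SnE]]]]].
exact: FD_residual_sos m_gt0 le_md orth eig sorted rhoE SnE.
Qed.

Lemma FD_step_det_gram_le lam c : 0 < lam -> lam <= c ->
  \det (Sn^T *m Sn + c%:M) <= c ^+ d * (1 + \tr (Sn^T *m Sn) / (m%:R * lam)) ^+ m.
Proof.
case: step => sigma [u [orth [_ [sorted [rhoE SnE]]]]].
exact: (FD_det_gram_le m_gt0 le_md orth sorted rhoE SnE).
Qed.

End FDStepFacts.

Section FDRun.
Variables (R : rcfType) (d m t : nat) (lam L : R).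
Variables (x : nat -> 'rV[R]_d) (S : nat -> 'M[R]_(m, d)) (rho : nat -> R).
Hypotheses (lam_gt0 : 0 < lam) (m_gt0 : (0 < m)%N) (le_md : (m <= d)%N).
Hypothesis x_bounded : forall s, (1 <= s <= t)%N -> vnorm (x s) <= L.
Hypothesis S0 : S 0%N = 0.
Hypothesis FD_run : forall s, (1 <= s <= t)%N -> FD_step (S s.-1) (x s) (rho s) (S s).

Let Q n := (S n)^T *m S n.
Let Delta s := FD_residual (S s.-1) (S s) (x s) (rho s).
Let Xsum := \sum_(1 <= s < t.+1) (x s)^T *m x s.
Let rhobar := \sum_(1 <= s < t.+1) rho s.

Lemma FD_rhobar_ge0 : 0 <= rhobar.
Proof.
rewrite /rhobar big_nat_cond sumr_ge0 // => s; rewrite andbT => /FD_run.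
exact: FD_step_rho_ge0.
Qed.

Lemma FD_sum_residual : \sum_(1 <= s < t.+1) Delta s = rhobar%:M - Xsum + Q t.
Proof.
have split_Delta s : Delta s = ((rho s)%:M - (x s)^T *m x s) + (Q s - Q s.-1).
  by rewrite /Delta /FD_residual /Q opprD addrCA addrAC addrC (addrC (- _)).
have telescope : \sum_(1 <= s < t.+1) (Q s - Q s.-1) = Q t.
  by rewrite big_add1 /= telescope_sumr // /Q S0 mulmx0 subr0.
rewrite (eq_bigr _ (fun s _ => split_Delta s)) big_split /= telescope sumrB.
by rewrite /rhobar [(\sum_(_ <= _ < _) _)%:M]raddf_sum.
Qed.

Lemma FD_sketch_mxtrace_le n : (n <= t)%N -> \tr (Q n) <= n%:R * L ^+ 2.
Proof.
elim: n => [|n IH] le_nt; first by rewrite /Q S0 mulmx0 mxtrace0 mul0r.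
have step_n : (1 <= n.+1 <= t)%N by rewrite le_nt.
apply: le_trans (FD_step_mxtrace_le m_gt0 le_md (FD_run step_n)) _.
rewrite mulrSr mulrDl mul1r lerD ?IH ?(ltnW le_nt) // mxtrace_outer_vnorm.
have vnorm_ge0 : 0 <= vnorm (x n.+1) := sqrtr_ge0 _.
apply: lerXn2r; rewrite ?nnegrE ?x_bounded //.
exact: le_trans vnorm_ge0 (x_bounded step_n).
Qed.

Lemma FD_det_le_sketch : \det (Xsum + lam%:M) <= \det (Q t + (lam + rhobar)%:M).
Proof.
have [V_pos detV_ge] : posdef (lam%:M + Xsum) /\ \det (lam%:M : 'M[R]_d) <= \det (lam%:M + Xsum).
  apply: posdef_det_le_add_sos; last by rewrite det_scalar exprn_gt0.
    by apply: sos_sum => s _; exact: sos_outer.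
  exact: posdef_scalar.
have detV_gt0 : 0 < \det (lam%:M + Xsum).
  by apply: lt_le_trans detV_ge; rewrite det_scalar exprn_gt0.
have Delta_sos : sos (\sum_(1 <= s < t.+1) Delta s).
  rewrite big_nat_cond; apply: sos_sum => s; rewrite andbT => /FD_run.
  exact: FD_step_residual_sos.
have [_ detV_le] := posdef_det_le_add_sos Delta_sos V_pos detV_gt0.
suff <- : lam%:M + Xsum + \sum_(1 <= s < t.+1) Delta s = Q t + (lam + rhobar)%:M.
  by rewrite addrC.
by rewrite FD_sum_residual raddfD [RHS]addrC !addrA [_ + Xsum + _]addrAC addrK.
Qed.

End FDRun.

Unset Implicit Arguments.

Theorem mainTheorem3 (R : rcfType) (d m t : nat) (lam L : R)
    (x : nat -> 'rV[R]_d) (S : nat -> 'M[R]_(m, d)) (rho : nat -> R) :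
  0 < lam -> 0 < L -> (1 <= m)%N -> (m <= d)%N ->
  (forall s, (1 <= s <= t)%N -> vnorm (x s) <= L) ->
  S 0%N = 0 ->
  (forall s, (1 <= s <= t)%N -> FD_step (S s.-1) (x s) (rho s) (S s)) ->
  \det (\sum_(1 <= s < t.+1) (x s)^T *m x s + lam%:M) / \det (lam%:M : 'M[R]_d)
    <= (1 + (\sum_(1 <= s < t.+1) rho s) / lam) ^+ d
       * (1 + t%:R * L ^+ 2 / (m%:R * lam)) ^+ m.
Proof.
move=> lam_gt0 L_gt0 m_gt0 le_md x_bounded S0 FD_run.
set c := lam + \sum_(1 <= s < t.+1) rho s.
set Q := (S t)^T *m S t.
have rhobar_ge0 := FD_rhobar_ge0 m_gt0 le_md FD_run.
have det_Q : \det (Q + c%:M) <= c ^+ d * (1 + \tr Q / (m%:R * lam)) ^+ m.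
  have [t0 | t_gt0] := posnP t.
    by rewrite /Q t0 S0 mulmx0 add0r mxtrace0 mul0r addr0 expr1n mulr1 det_scalar.
  have step_t : (1 <= t <= t)%N by rewrite t_gt0 leqnn.
  by rewrite (FD_step_det_gram_le m_gt0 le_md (FD_run t step_t) lam_gt0) // lerDl.
rewrite det_scalar ler_pdivrMr ?exprn_gt0 //.
apply: le_trans (FD_det_le_sketch lam_gt0 m_gt0 le_md S0 FD_run) _.
apply: le_trans det_Q _.
rewrite mulrAC -exprMn mulrDl mul1r divfK ?gt_eqF // ler_wpM2l ?exprn_ge0 //.
  by rewrite addr_ge0 // ltW.
apply: lerXn2r; rewrite ?nnegrE.
- by rewrite addr_ge0 // divr_ge0 ?mxtrace_gram_ge0 // mulr_ge0 // ltW.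
- by rewrite addr_ge0 // divr_ge0 ?mulr_ge0 ?exprn_ge0 ?ler0n ?ltW.
rewrite lerD2l ler_pM2r ?invr_gt0 ?mulr_gt0 ?ltr0n //.
by rewrite /Q; have := FD_sketch_mxtrace_le m_gt0 le_md x_bounded S0 FD_run (leqnn t).
Qed.
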